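(* The $SEP$ composition $\mathbb{C}^2\otimes_{\min}\mathbb{C}^2$ exhibits dimension mismatch: its information dimension is strictly greater than $4$, whereas its operational (measurement) dimension equals $4$.
   Context: In $\mathbb{C}^2\otimes_{\min}\mathbb{C}^2$ (the $SEP$ composition of two qubits), states are the separable density operators on $\mathbb{C}^2\otimes\mathbb{C}^2$ and a measurement is a finite family of Hermitian operators $\{E_i\}$, each with $\operatorname{Tr}(E_iX)\ge0$ for every separable positive operator $X$, summing to the identity. The operational (measurement) dimension of a system is the maximal cardinality of a set of states perfectly distinguishable by a single measurement (i.e. a measurement $\{E_i\}$ with $\operatorname{Tr}(E_i\omega_j)=\delta_{ij}$). The information dimension is the maximal cardinality of a set of states that is pairwise distinguishable, i.e. for each pair $i\neq j$ there is some two-outcome measurement $\{E,\mathbf1-E\}$ with $\operatorname{Tr}(E\omega_i)=1$, $\operatorname{Tr}(E\omega_j)=0$. Dimension mismatch means the information dimension differs from the operational dimension. *)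

From mathcomp Require Import all_boot all_algebra.
From mathcomp Require Import reals.
From mathcomp.real_closed Require Export complex mxtens.

Set Implicit Arguments.
Unset Strict Implicit.
Unset Printing Implicit Defensive.
Import GRing.Theory Num.Theory.
Local Open Scope ring_scope.

Section QuantumDefs.
Variable R : realType.
Local Notation C := R[i].

Definition adjmx {m n : nat} (A : 'M[C]_(m, n)) : 'M[C]_(n, m) :=
  (map_mx Num.conj A)^T.

Definition hermitian {n : nat} (A : 'M[C]_n) : Prop := adjmx A = A.

Definition psd {n : nat} (A : 'M[C]_n) : Prop :=
  hermitian A /\ forall v : 'cV[C]_n, 0 <= (adjmx v *m A *m v) 0 0.

Definition density {n : nat} (A : 'M[C]_n) : Prop := psd A /\ \tr A = 1.

Definition op22 := 'M[C]_(2 * 2).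

Definition sep_state (w : op22) : Prop :=
  exists (k : nat) (p : 'I_k -> C) (a b : 'I_k -> 'M[C]_2),
    (forall l, 0 <= p l) /\ \sum_(l < k) p l = 1 /\
    (forall l, density (a l) /\ density (b l)) /\
    w = \sum_(l < k) p l *: (a l *t b l).

Definition sep_pos (X : op22) : Prop :=
  exists (k : nat) (a b : 'I_k -> 'M[C]_2),
    (forall l, psd (a l) /\ psd (b l)) /\
    X = \sum_(l < k) (a l *t b l).

(* effects of the SEP (minimal tensor product) composition *)
Definition sep_effect (E : op22) : Prop :=
  hermitian E /\ forall X, sep_pos X -> 0 <= \tr (E *m X).

Definition sep_measurement (n : nat) (E : 'I_n -> op22) : Prop :=
  (forall i, sep_effect (E i)) /\ \sum_(i < n) E i = 1%:M.

Definition perfectly_distinguishable (n : nat) (w : 'I_n -> op22) : Prop :=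
  (forall i, sep_state (w i)) /\
  exists E : 'I_n -> op22, sep_measurement E /\
    forall i j, \tr (E i *m w j) = (i == j)%:R.

Definition pairwise_distinguishable (n : nat) (w : 'I_n -> op22) : Prop :=
  (forall i, sep_state (w i)) /\
  forall i j, i != j ->
    exists E : op22, sep_effect E /\ sep_effect (1%:M - E) /\
      \tr (E *m w i) = 1 /\ \tr (E *m w j) = 0.

Definition operational_dim_eq (d : nat) : Prop :=
  (exists w : 'I_d -> op22, perfectly_distinguishable w) /\
  (forall (n : nat) (w : 'I_n -> op22), perfectly_distinguishable w -> (n <= d)%N).

Definition information_dim_gt (d : nat) : Prop :=
  exists (n : nat) (w : 'I_n -> op22), (d < n)%N /\ pairwise_distinguishable w.

End QuantumDefs.

(* Both halves of the theorem are proved with product states and explicit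
   effects, using only 2x2 matrix calculus.
   - A 2x2 Hermitian matrix is positive iff its entries (al, x + iy; x - iy, be)
     satisfy al, be >= 0 and x^2 + y^2 <= al * be; equivalently its Pauli
     coordinates (t, A_x, A_y, A_z) satisfy |A| <= t (Bloch ball).
   - For d in [-1,1]^3 the operator E(d) = (1 (x) 1 + sum_a d_a s_a (x) s_a)/2
     is a SEP effect: on a product of positive operators its expectation is
     (t u + sum_a d_a A_a B_a)/2 >= 0 by Cauchy-Schwarz, and 1 - E(d) = E(-d).
   - Five product states |00>, |01>, |++>, |+->, |+i +i> have correlation
     vectors (A_a B_a)_a equal to the five distinct signed unit vectors
     e_z, -e_z, e_x, -e_x, e_y; for any two of them a suitable E(d) takes the
     values 1 and 0, so the information dimension is at least 5.
   - The computational basis |kl> is perfectly distinguished by its own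
     projectors, so the operational dimension is at least 4; conversely, for
     a SEP effect E and separable state w, Tr(E w) <= Tr E since 1 - a (x) b
     is separable positive, so n perfectly distinguishable states force
     n <= Tr 1 = 4. *)

From mathcomp Require Import all_boot all_order all_algebra.
From mathcomp Require Import reals.
From mathcomp.real_closed Require Import complex mxtens.
From mathcomp Require Import ring lra.
(* Imported last: its [hermitian] shadows the notation of the same name
   from mathcomp's sesquilinear forms library. *)
Import Order.TTheory GRing.Theory Num.Theory.
Local Open Scope ring_scope.
Local Open Scope complex_scope.

Section SepQubits.
Variable R : realType.
Local Notation C := R[i].

Lemma complex0E : (0 : C) = 0 +i* 0. Proof. by []. Qed.
Lemma complex1E : (1 : C) = 1 +i* 0. Proof. by []. Qed.
Lemma complex_realE (k : R) : k%:C = k +i* 0. Proof. by []. Qed.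

Ltac complex_coords := rewrite ?complex0E ?complex1E ?complex_realE; simpc.

Ltac complex_lra :=
  complex_coords; first [done | congr (_ +i* _); lra | lra | nra].

Lemma num_conjE (z : C) : Num.conj z = conjc z.
Proof. by []. Qed.

Lemma ord2P (i : 'I_2) : i = 0 \/ i = 1.
Proof. by case: i => [[|[|//]]] Hi; [left|right]; apply: val_inj. Qed.

Lemma lift0_ord2 : (lift ord0 ord0 : 'I_2) = 1.
Proof. exact: val_inj. Qed.

Lemma matrix2P (A B : 'M[C]_2) : A 0 0 = B 0 0 -> A 0 1 = B 0 1 ->
  A 1 0 = B 1 0 -> A 1 1 = B 1 1 -> A = B.
Proof.
move=> e00 e01 e10 e11; apply/matrixP => i j.
by case: (ord2P i) => ->; case: (ord2P j) => ->.
Qed.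

Definition mx2 (a b c d : C) : 'M[C]_2 :=
  \matrix_(i < 2, j < 2) (nth [::] [:: [:: a; b]; [:: c; d]] i)`_j.

Definition cv2 (c0 c1 : C) : 'cV[C]_2 := \col_(i < 2) [:: c0; c1]`_i.

Lemma trace2 (A : 'M[C]_2) : \tr A = A 0 0 + A 1 1.
Proof. by rewrite /mxtrace !big_ord_recl big_ord0 lift0_ord2 addr0. Qed.

Lemma trace2_mul (A B : 'M[C]_2) :
  \tr (A *m B) = A 0 0 * B 0 0 + A 0 1 * B 1 0 + A 1 0 * B 0 1 + A 1 1 * B 1 1.
Proof. by rewrite trace2 !mxE !big_ord_recl !big_ord0 !lift0_ord2; ring. Qed.

Lemma quad_form2 (A : 'M[C]_2) (v : 'cV[C]_2) :
  (adjmx v *m A *m v) 0 0 =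
    conjc (v 0 0) * A 0 0 * v 0 0 + conjc (v 0 0) * A 0 1 * v 1 0
  + conjc (v 1 0) * A 1 0 * v 0 0 + conjc (v 1 0) * A 1 1 * v 1 0.
Proof.
rewrite /adjmx !mxE !big_ord_recl !big_ord0 !mxE !big_ord_recl !big_ord0.
by rewrite !mxE !lift0_ord2 /= !num_conjE; ring.
Qed.

(** * Positivity of 2x2 matrices *)

(* A positive 2x2 matrix has real nonnegative diagonal, conjugate
   off-diagonal entries and nonnegative determinant.  Tested on the
   vectors e_0, e_1 and the kernel candidates of the determinant. *)
Lemma psd2_entries (A : 'M[C]_2) : psd A -> exists al be x y : R,
  [/\ A 0 0 = al%:C, A 1 1 = be%:C, A 0 1 = x +i* y, A 1 0 = x -i* y &
      [/\ 0 <= al, 0 <= be & x ^+ 2 + y ^+ 2 <= al * be]].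
Proof.
case=> herm pos.
have entry_herm i j : conjc (A j i) = A i j by rewrite -[in RHS]herm /adjmx !mxE.
have h00 := entry_herm 0 0; have h11 := entry_herm 1 1; have h01 := entry_herm 0 1.
have q1 := pos (cv2 1 0); have q2 := pos (cv2 0 1).
have q3 := pos (cv2 (A 1 1) (- conjc (A 0 1))); have q4 := pos (cv2 (A 0 1) (- A 0 0)).
have q5 := pos (cv2 1 (- conjc (A 0 1))).
rewrite !quad_form2 !mxE /= in q1 q2 q3 q4 q5.
move: h00 h11 h01 q1 q2 q3 q4 q5.
case: (A 0 0) => p q; case: (A 1 1) => r s; case: (A 0 1) => x y; case: (A 1 0) => u w.
simpc => _ _ [-> /eqP]; rewrite eqr_oppLR => /eqP ->.
move=> /andP[/eqP -> hp] /andP[/eqP -> hr] /andP[_ h3] /andP[_ h4] /andP[_ h5].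
exists p, r, x, y; split => //; split => //.
have [p0|p_neq0] := eqVneq p 0; first by subst p; nra.
have p_gt0 : 0 < p by rewrite lt0r p_neq0 hp.
nra.
Qed.

(* Conversely such entries define a positive matrix: for al > 0,
   al * v*Av is a sum of squares plus (al be - x^2 - y^2) |v_1|^2. *)
Lemma psd2_of_entries (A : 'M[C]_2) (al be x y : R) :
  A 0 0 = al%:C -> A 1 1 = be%:C -> A 0 1 = x +i* y -> A 1 0 = x -i* y ->
  0 <= al -> 0 <= be -> x ^+ 2 + y ^+ 2 <= al * be -> psd A.
Proof.
move=> e00 e11 e01 e10 al_ge0 be_ge0 det_ge0; split.
  by apply: matrix2P; rewrite /adjmx !mxE !num_conjE ?e00 ?e11 ?e01 ?e10; simpc.
move=> v; rewrite quad_form2 e00 e11 e01 e10.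
case: (v 0 0) => p q; case: (v 1 0) => r s; complex_coords.
apply/andP; split; first by apply/eqP; ring.
have [al0|al_neq0] := eqVneq al 0.
  subst al; have x0 : x = 0 by nra.
  have y0 : y = 0 by nra.
  by subst x y; nra.
have al_gt0 : 0 < al by rewrite lt0r al_neq0 al_ge0.
set Q := (X in 0 <= X).
have sos : al * Q = (al * p + x * r - y * s) ^+ 2 + (al * q + x * s + y * r) ^+ 2
    + (al * be - (x ^+ 2 + y ^+ 2)) * (r ^+ 2 + s ^+ 2) by rewrite /Q; ring.
rewrite -(pmulr_rge0 _ al_gt0) sos.
by rewrite !addr_ge0 ?sqr_ge0 // mulr_ge0 ?subr_ge0 // addr_ge0 ?sqr_ge0.
Qed.

(* For a qubit density A, 1 - A is positive: its diagonal is (be, al) and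
   its determinant equals that of A. *)
Lemma psd_one_minus_density (A : 'M[C]_2) : density A -> psd (1%:M - A).
Proof.
case=> /psd2_entries [al [be [x [y [e00 e11 e01 e10 [al_ge0 be_ge0 det_ge0]]]]]].
rewrite trace2 e00 e11; complex_coords => -[tr1].
by apply: (@psd2_of_entries _ be al (- x) (- y));
  rewrite ?mxE /= ?e00 ?e11 ?e01 ?e10; complex_lra.
Qed.

Lemma psd2_one : psd (1%:M : 'M[C]_2).
Proof.
by apply: (@psd2_of_entries _ 1 1 0 0); rewrite ?mxE /=; complex_lra.
Qed.

(** * Pauli matrices and the Bloch ball *)

Definition pauli (a : nat) : 'M[C]_2 :=
  match a with 0 => mx2 0 1 1 0 | 1 => mx2 0 (- 'i) 'i 0 | _ => mx2 1 0 0 (-1) end.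

Lemma pauli_herm a : adjmx (pauli a) = pauli a.
Proof.
by case: a => [|[|a]]; apply: matrix2P; rewrite !mxE /= !num_conjE; complex_coords.
Qed.

Lemma psd2_bloch (A : 'M[C]_2) : psd A -> exists t A0 A1 A2 : R,
  [/\ \tr A = t%:C, \tr (pauli 0 *m A) = A0%:C, \tr (pauli 1 *m A) = A1%:C,
      \tr (pauli 2 *m A) = A2%:C & 0 <= t /\ A0 ^+ 2 + A1 ^+ 2 + A2 ^+ 2 <= t ^+ 2].
Proof.
move=> /psd2_entries [al [be [x [y [e00 e11 e01 e10 [al_ge0 be_ge0 det_ge0]]]]]].
exists (al + be), (2 * x), (- (2 * y)), (al - be).
rewrite trace2 !trace2_mul !mxE /= e00 e11 e01 e10.
by split; try (complex_coords; congr (_ +i* _); ring); split; [exact: addr_ge0 | nra].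
Qed.

Lemma trace_tens m n (A : 'M[C]_m) (B : 'M[C]_n) : \tr (A *t B) = \tr A * \tr B.
Proof. by rewrite /mxtrace mulr_sum; apply: eq_bigr => k _; rewrite mxE. Qed.

Lemma trace_tens_mul m n (A X : 'M[C]_m) (B Y : 'M[C]_n) :
  \tr ((A *t B) *m (X *t Y)) = \tr (A *m X) * \tr (B *m Y).
Proof. by rewrite tensmx_mul trace_tens. Qed.

Lemma tens_one m n : (1%:M : 'M[C]_m) *t (1%:M : 'M[C]_n) = 1%:M.
Proof.
apply/matrixP => i j.
case: (mxtens_indexP i) => i1 i2; case: (mxtens_indexP j) => j1 j2.
rewrite tensmxE !mxE (can_eq (@mxtens_indexK m n)) xpair_eqE.
by case: (i1 == j1); case: (i2 == j2); rewrite /= ?mulr1 ?mulr0 ?mul0r.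
Qed.

Lemma adjmxD m (A B : 'M[C]_m) : adjmx (A + B) = adjmx A + adjmx B.
Proof. by apply/matrixP => i j; rewrite !mxE !num_conjE rmorphD. Qed.

Lemma adjmxZ_real m (k : R) (A : 'M[C]_m) : adjmx (k%:C *: A) = k%:C *: adjmx A.
Proof. by apply/matrixP => i j; rewrite !mxE !num_conjE rmorphM /= oppr0. Qed.

Lemma adjmx_tens m n (A : 'M[C]_m) (B : 'M[C]_n) : adjmx (A *t B) = adjmx A *t adjmx B.
Proof. by apply/matrixP => i j; rewrite !mxE !num_conjE rmorphM. Qed.

Lemma adjmx1 m : adjmx (1%:M : 'M[C]_m) = 1%:M.
Proof. by apply/matrixP => i j; rewrite !mxE !num_conjE eq_sym conjc_nat. Qed.

Lemma one_minus_tens (A B : 'M[C]_2) :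
  (1%:M : op22 R) - A *t B = (1%:M - A) *t B + 1%:M *t (1%:M - B).
Proof. by rewrite -tens_one; apply/matrixP => i j; rewrite !mxE; ring. Qed.

Lemma sep_pos_tens (A B : 'M[C]_2) : psd A -> psd B -> sep_pos (A *t B).
Proof. by move=> pA pB; exists 1%N, (fun _ => A), (fun _ => B); rewrite big_ord1. Qed.

Lemma sep_state_tens (A B : 'M[C]_2) : density A -> density B -> sep_state (A *t B).
Proof.
move=> dA dB; exists 1%N, (fun _ => 1), (fun _ => A), (fun _ => B).
by rewrite !big_ord1 scale1r.
Qed.

Lemma sep_effect_of_products (E : op22 R) : hermitian E ->
  (forall A B : 'M[C]_2, psd A -> psd B -> 0 <= \tr (E *m (A *t B))) ->
  sep_effect E.
Proof.
move=> herm pos; split => // X [k [A [B [pAB ->]]]].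
rewrite mulmx_sumr raddf_sum; apply: sumr_ge0 => l _.
by case: (pAB l) => pA pB; apply: pos.
Qed.

(** * The correlation effects E(d) *)

Definition corr_effect (d : nat -> R) : op22 R :=
  (1/2 : R)%:C *: (1%:M *t 1%:M + (d 0)%:C *: (pauli 0 *t pauli 0)
    + (d 1)%:C *: (pauli 1 *t pauli 1) + (d 2)%:C *: (pauli 2 *t pauli 2)).

Lemma corr_effect_herm (d : nat -> R) : hermitian (corr_effect d).
Proof.
by rewrite /hermitian /corr_effect adjmxZ_real !adjmxD !adjmxZ_real !adjmx_tens
  adjmx1 !pauli_herm.
Qed.

Lemma trace_corr_effect (d : nat -> R) (A B : 'M[C]_2) :
  \tr (corr_effect d *m (A *t B)) = (1/2 : R)%:C * (\tr A * \tr B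
    + (d 0)%:C * (\tr (pauli 0 *m A) * \tr (pauli 0 *m B))
    + (d 1)%:C * (\tr (pauli 1 *m A) * \tr (pauli 1 *m B))
    + (d 2)%:C * (\tr (pauli 2 *m A) * \tr (pauli 2 *m B))).
Proof.
rewrite /corr_effect -scalemxAl mxtraceZ !mulmxDl !mxtraceD -!scalemxAl.
by rewrite !mxtraceZ !trace_tens_mul !mul1mx.
Qed.

(* Cauchy-Schwarz in R^3 through Lagrange's identity. *)
Lemma cauchy_schwarz3 (u1 u2 u3 v1 v2 v3 : R) :
  (u1 * v1 + u2 * v2 + u3 * v3) ^+ 2
    <= (u1 ^+ 2 + u2 ^+ 2 + u3 ^+ 2) * (v1 ^+ 2 + v2 ^+ 2 + v3 ^+ 2).
Proof.
rewrite -subr_ge0.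
have -> : (u1 ^+ 2 + u2 ^+ 2 + u3 ^+ 2) * (v1 ^+ 2 + v2 ^+ 2 + v3 ^+ 2)
    - (u1 * v1 + u2 * v2 + u3 * v3) ^+ 2
  = (u1 * v2 - u2 * v1) ^+ 2 + (u1 * v3 - u3 * v1) ^+ 2 + (u2 * v3 - u3 * v2) ^+ 2
  by ring.
by rewrite !addr_ge0 ?sqr_ge0.
Qed.

Lemma ball_inner_ge0 (s u1 u2 u3 t v1 v2 v3 : R) :
  0 <= s -> u1 ^+ 2 + u2 ^+ 2 + u3 ^+ 2 <= s ^+ 2 ->
  0 <= t -> v1 ^+ 2 + v2 ^+ 2 + v3 ^+ 2 <= t ^+ 2 ->
  0 <= s * t + (u1 * v1 + u2 * v2 + u3 * v3).
Proof.
move=> s_ge0 u_le t_ge0 v_le.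
have : (u1 * v1 + u2 * v2 + u3 * v3) ^+ 2 <= s ^+ 2 * t ^+ 2.
  by apply: le_trans (cauchy_schwarz3 _ _ _ _ _ _) _; rewrite ler_pM ?addr_ge0 ?sqr_ge0.
have : 0 <= s * t by apply: mulr_ge0.
nra.
Qed.

Lemma corr_effect_sep (d : nat -> R) :
  d 0 ^+ 2 <= 1 -> d 1 ^+ 2 <= 1 -> d 2 ^+ 2 <= 1 ->
  sep_effect (corr_effect d).
Proof.
move=> d0 d1 d2; apply: sep_effect_of_products; first exact: corr_effect_herm.
move=> A B pA pB; rewrite trace_corr_effect.
have [s [u1 [u2 [u3 [-> -> -> -> [s_ge0 u_le]]]]]] := psd2_bloch _ pA.
have [t [v1 [v2 [v3 [-> -> -> -> [t_ge0 v_le]]]]]] := psd2_bloch _ pB.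
complex_coords => /=.
rewrite mulr_ge0 ?invr_ge0 ?ler0n //.
have -> : s * t + d 0 * (u1 * v1) + d 1 * (u2 * v2) + d 2 * (u3 * v3)
  = s * t + ((d 0 * u1) * v1 + (d 1 * u2) * v2 + (d 2 * u3) * v3) by ring.
apply: ball_inner_ge0 => //; apply: le_trans u_le; rewrite !exprMn.
by rewrite !lerD // ler_piMl ?sqr_ge0.
Qed.

Lemma corr_effect_compl (d : nat -> R) :
  1%:M - corr_effect d = corr_effect (fun a => - d a).
Proof.
have half : (1/2 : R)%:C = 1/2.
  by rewrite rmorphM rmorphV ?unitfE ?pnatr_eq0 // rmorph1 rmorph_nat.
by apply/matrixP => i j; rewrite /corr_effect -tens_one !mxE !rmorphN half; field.
Qed.

Lemma corr_measurement (d : nat -> R) :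
  d 0 ^+ 2 <= 1 -> d 1 ^+ 2 <= 1 -> d 2 ^+ 2 <= 1 ->
  sep_effect (corr_effect d) /\ sep_effect (1%:M - corr_effect d).
Proof.
move=> d0 d1 d2; rewrite corr_effect_compl.
by split; apply: corr_effect_sep; rewrite ?sqrrN.
Qed.

Local Notation half := ((1/2 : R)%:C).

Definition qubit (k : nat) : 'M[C]_2 :=
  match k with
  | 0 => mx2 1 0 0 0
  | 1 => mx2 0 0 0 1
  | 2 => mx2 half half half half
  | 3 => mx2 half (- half) (- half) half
  | _ => mx2 half (0 +i* (- (1/2))) (0 +i* (1/2)) half
  end.

(* Component a (0: x, 1: y, 2: z) of the Bloch vector of [qubit k]. *)
Definition bloch (a k : nat) : R :=
  match a, k with
  | 0, 2 => 1 | 0, 3 => -1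
  | 1, (0 | 1 | 2 | 3) => 0 | 1, _ => 1
  | 2, 0 => 1 | 2, 1 => -1
  | _, _ => 0
  end.

Lemma qubit_trace k : \tr (qubit k) = 1.
Proof. by case: k => [|[|[|[|k]]]]; rewrite trace2 !mxE /=; complex_lra. Qed.

Lemma qubit_pauli a k : (a < 3)%N -> \tr (pauli a *m qubit k) = (bloch a k)%:C.
Proof.
case: a => [|[|[|//]]] _; case: k => [|[|[|[|k]]]];
  by rewrite trace2_mul !mxE /=; complex_lra.
Qed.

Lemma qubit_density k : density (qubit k).
Proof.
split; last exact: qubit_trace.
have e := (@psd2_of_entries (qubit k)).
case: k e => [|[|[|[|k]]]] /= e.
- by apply: (e 1 0 0 0); rewrite ?mxE /=; complex_lra.
- by apply: (e 0 1 0 0); rewrite ?mxE /=; complex_lra.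
- by apply: (e (1/2) (1/2) (1/2) 0); rewrite ?mxE /=; complex_lra.
- by apply: (e (1/2) (1/2) (-(1/2)) 0); rewrite ?mxE /=; complex_lra.
- by apply: (e (1/2) (1/2) 0 (-(1/2))); rewrite ?mxE /=; complex_lra.
Qed.

(** * Five pairwise distinguishable separable states *)

(* State i is qubit (left5 i) (x) qubit (right5 i):
   |00>, |01>, |++>, |+->, |+i +i>. *)
Definition left5 (i : nat) : nat := match i with 0 | 1 => 0 | 2 | 3 => 2 | _ => 4 end.
Definition right5 (i : nat) : nat := match i with 0 | 1 | 2 | 3 => i | _ => 4 end.
Definition five_states (i : 'I_5) : op22 R := qubit (left5 i) *t qubit (right5 i).

(* Correlation vector of state i; these are e_z, -e_z, e_x, -e_x, e_y. *)
Definition corr (a : nat) (i : 'I_5) : R := bloch a (left5 i) * bloch a (right5 i).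

Definition corr_value (d : nat -> R) (i : 'I_5) : R :=
  1/2 * (1 + d 0 * corr 0 i + d 1 * corr 1 i + d 2 * corr 2 i).

Lemma trace_corr_five (d : nat -> R) (i : 'I_5) :
  \tr (corr_effect d *m five_states i) = (corr_value d i)%:C.
Proof.
rewrite trace_corr_effect !qubit_trace !qubit_pauli //.
by complex_coords; congr (_ +i* _); rewrite /corr_value /corr; ring.
Qed.

(* For distinct signed unit axis vectors c_i, c_j the choice
   d = c_i - c_j + (c_i.c_j) c_i has entries in [-1,1], d.c_i = 1 and
   d.c_j = -1, so E(d) separates state i from state j. *)
Definition separator (i j : 'I_5) (a : nat) : R :=
  corr a i - corr a j
  + (corr 0 i * corr 0 j + corr 1 i * corr 1 j + corr 2 i * corr 2 j) * corr a i.

Lemma separator_spec (i j : 'I_5) : i != j ->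
  [/\ separator i j 0 ^+ 2 <= 1, separator i j 1 ^+ 2 <= 1, separator i j 2 ^+ 2 <= 1,
      corr_value (separator i j) i = 1 & corr_value (separator i j) j = 0].
Proof.
case: i => [[|[|[|[|[|//]]]]] Hi]; case: j => [[|[|[|[|[|//]]]]] Hj] //= _.
all: rewrite /corr_value /separator /corr /=; split; lra.
Qed.

Lemma five_pairwise : pairwise_distinguishable five_states.
Proof.
split=> [i|i j neq_ij]; first exact/sep_state_tens/qubit_density/qubit_density.
have [s0 s1 s2 val_i val_j] := separator_spec i j neq_ij.
exists (corr_effect (separator i j)).
by rewrite !trace_corr_five val_i val_j; have [] := corr_measurement _ s0 s1 s2.
Qed.

(** * The computational basis is perfectly distinguishable *)

Definition basis_states (i : 'I_4) : op22 R := qubit (i %/ 2) *t qubit (i %% 2).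

Lemma qubit01_orth a c : (a < 2)%N -> (c < 2)%N ->
  \tr (qubit a *m qubit c) = (a == c)%:R.
Proof.
by case: a => [|[|//]] _; case: c => [|[|//]] _; rewrite trace2_mul !mxE /=; complex_coords.
Qed.

Lemma qubit01_pos a (X : 'M[C]_2) : (a < 2)%N -> psd X -> 0 <= \tr (qubit a *m X).
Proof.
move=> a_lt2 /psd2_entries [al [be [x [y [e00 e11 e01 e10 [al_ge0 be_ge0 _]]]]]].
by case: a a_lt2 => [|[|//]] _; rewrite trace2_mul !mxE /= e00 e11 e01 e10;
  complex_coords.
Qed.

Lemma basis_effect a b : (a < 2)%N -> (b < 2)%N -> sep_effect (qubit a *t qubit b).
Proof.
move=> a_lt2 b_lt2; apply: sep_effect_of_products.
  by rewrite /hermitian adjmx_tens; case: (qubit_density a) => [[-> _] _];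
     case: (qubit_density b) => [[-> _] _].
by move=> X Y pX pY; rewrite trace_tens_mul mulr_ge0 ?qubit01_pos.
Qed.

Lemma basis_sum : \sum_(i < 4) basis_states i = 1%:M.
Proof.
have q01 : qubit 0 + qubit 1 = 1%:M.
  by apply: matrix2P; rewrite !mxE /=; complex_coords.
rewrite !big_ord_recl big_ord0 /basis_states /= -tens_one -q01.
by apply/matrixP => i j; rewrite !mxE; ring.
Qed.

Lemma basis_perfect : perfectly_distinguishable basis_states.
Proof.
split=> [i|]; first exact/sep_state_tens/qubit_density/qubit_density.
exists basis_states; split.
  by split=> [[[|[|[|[|//]]]] Hi]|]; [apply: basis_effect.. | exact: basis_sum].
case=> [[|[|[|[|//]]]] Hi]; case=> [[|[|[|[|//]]]] Hj];
  by rewrite /basis_states trace_tens_mul !qubit01_orth //= ?mulr1 ?mulr0 ?mul0r.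
Qed.

(** * Upper bound on the operational dimension *)

(* Tr(E w) <= Tr E for a SEP effect E and a separable state w, because
   E is nonnegative on the separable positive operators 1 - a (x) b. *)
Lemma sep_effect_trace_le (E w : op22 R) : sep_effect E -> sep_state w ->
  \tr (E *m w) <= \tr E.
Proof.
move=> [_ pos] [k [p [A [B [p_ge0 [p_sum [dAB ->]]]]]]].
rewrite -[\tr E]mul1r -p_sum mulr_suml mulmx_sumr raddf_sum /=.
apply: ler_sum => l _; rewrite -scalemxAr mxtraceZ ler_wpM2l //.
case: (dAB l) => dA dB.
rewrite -subr_ge0 -{1}[E]mulmx1 -raddfB -mulmxBr one_minus_tens mulmxDr raddfD /=.
apply: addr_ge0; apply/pos/sep_pos_tens.
- exact: psd_one_minus_density.
- exact: dB.1.
- exact: psd2_one.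
- exact: psd_one_minus_density.
Qed.

Lemma perfect_le4 n (w : 'I_n -> op22 R) : perfectly_distinguishable w -> (n <= 4)%N.
Proof.
move=> [sep_w [E [[eff_E sum_E] tr_Ew]]].
suff : (n%:R : C) <= \tr (1%:M : op22 R) by rewrite mxtrace1 ler_nat.
have -> : (n%:R : C) = \sum_(i < n) \tr (E i *m w i).
  by rewrite -[in LHS](card_ord n) -sumr_const; apply: eq_bigr => i _; rewrite tr_Ew eqxx.
by rewrite -sum_E raddf_sum ler_sum // => i _; apply: sep_effect_trace_le.
Qed.

End SepQubits.

Theorem corollary1 (R : realType) :
  information_dim_gt R 4 /\ operational_dim_eq R 4.
Proof.
split; first by exists 5%N, (five_states R); split; last exact: five_pairwise.
by split; [exists (basis_states R); exact: basis_perfect | exact: perfect_le4].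
Qed.
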